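(* Let $A\subset\mathbb{R}^n$ and let $w\in\mathbb{R}^n$ be such that $0\notin\overline A$ and $w\notin\overline A$. Let $\Phi(x)=\frac{x}{|x|^2}$ be the geometric inversion with respect to the origin and $\Psi(x)=\frac{x-w}{|x-w|^2}$ the geometric inversion with respect to the point $w$. Then $f=\Psi\circ\Phi:\Phi(A)\to\Psi(A)$ is a bi-Lipschitz mapping. In particular, $\overline{\dim}_B\Phi(A)=\overline{\dim}_B\Psi(A)$ and $\underline{\dim}_B\Phi(A)=\underline{\dim}_B\Psi(A)$.
   Context: $|\cdot|$ denotes the Euclidean norm. A map $f$ is bi-Lipschitz if there are constants $c_1,c_2>0$ with $c_1|a-b|\le|f(a)-f(b)|\le c_2|a-b|$ for all $a,b$ in its domain. For a nonempty bounded set $B\subset\mathbb{R}^n$, with $B_\varepsilon$ its Euclidean $\varepsilon$-neighbourhood and $|B_\varepsilon|$ its $n$-dimensional Lebesgue measure, the upper (resp. lower) $s$-dimensional Minkowski content is $\mathcal M^{*s}(B)=\limsup_{\varepsilon\to0}|B_\varepsilon|/\varepsilon^{n-s}$ (resp. $\mathcal M_*^s(B)$ with $\liminf$), and the upper (resp. lower) box dimension is $\overline{\dim}_BB=\inf\{s\ge0:\mathcal M^{*s}(B)=0\}$ (resp. $\underline{\dim}_BB=\inf\{s\ge0:\mathcal M_*^{s}(B)=0\}$). *)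

From mathcomp Require Import all_boot all_order all_algebra.
From mathcomp Require Import all_classical all_reals all_analysis.
Set Implicit Arguments. Unset Strict Implicit. Unset Printing Implicit Defensive.
Import Order.TTheory GRing.Theory Num.Theory.
Import numFieldNormedType.Exports.
Local Open Scope classical_set_scope.
Local Open Scope ring_scope.

Section Defs.
Variables (R : realType) (n : nat).
Local Notation V := 'rV[R]_n.

Definition enorm (x : V) : R := Num.sqrt (\sum_(i < n) x ord0 i ^+ 2).

Definition inversion (w x : V) : V := (enorm (x - w) ^+ 2)^-1 *: (x - w).

Definition bi_lipschitz_on (D : set V) (f : V -> V) : Prop :=
  exists c1 c2 : R, 0 < c1 /\ 0 < c2 /\
    forall a b, D a -> D b ->
      c1 * enorm (a - b) <= enorm (f a - f b) /\
      enorm (f a - f b) <= c2 * enorm (a - b).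

Definition box (a b : V) : set V := [set x | forall i, a ord0 i <= x ord0 i <= b ord0 i].
Definition box_vol (a b : V) : R := \prod_(i < n) Num.max 0 (b ord0 i - a ord0 i).

Definition lebesgue_outer (E : set V) : \bar R :=
  ereal_inf [set x : \bar R | exists (a b : nat -> V),
     E `<=` \bigcup_k box (a k) (b k) /\
     x = (\sum_(0 <= k <oo) (box_vol (a k) (b k))%:E)%E].

Definition eps_nbhd (B : set V) (e : R) : set V :=
  [set x | exists2 b, B b & enorm (x - b) < e].

Definition mink_ratio (B : set V) (s e : R) : \bar R :=
  (lebesgue_outer (eps_nbhd B e) * ((e `^ (n%:R - s))^-1)%:E)%E.

(** upper / lower s-dimensional Minkowski content: limsup / liminf as e -> 0+ *)
Definition upper_minkowski (B : set V) (s : R) : \bar R :=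
  ereal_inf [set ereal_sup [set mink_ratio B s e | e in [set e : R | 0 < e < d]]
            | d in [set d : R | 0 < d]].
Definition lower_minkowski (B : set V) (s : R) : \bar R :=
  ereal_sup [set ereal_inf [set mink_ratio B s e | e in [set e : R | 0 < e < d]]
            | d in [set d : R | 0 < d]].

Definition upper_box_dim (B : set V) : \bar R :=
  ereal_inf [set s%:E | s in [set s : R | 0 <= s /\ upper_minkowski B s = 0%E]].
Definition lower_box_dim (B : set V) : \bar R :=
  ereal_inf [set s%:E | s in [set s : R | 0 <= s /\ lower_minkowski B s = 0%E]].

End Defs.

(* Since 0 and w are away from A, the map Psi \o Phi is the Moebius map
   y |-> Phi (Phi y - w), and the identity |Phi a - Phi b| = |a - b| / (|a| |b|)
   bounds its distortion of distances on Phi(A) above and below.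
   The same identity shows that this map is Lipschitz on the part of a small
   neighbourhood of Phi(A) that stays away from Phi w (where it blows up), and that
   it maps this set onto a neighbourhood of Psi(A). A Lipschitz map multiplies
   outer measure by at most a constant, so the volumes of the e-neighbourhoods of
   Psi(A) are bounded by those of Phi(A) at radius L e; this preserves the vanishing
   of the Minkowski contents. Translating A by -w swaps the roles of 0 and w and
   gives the reverse bound, hence equal box dimensions. *)

From mathcomp Require Import all_boot all_order all_algebra.
From mathcomp Require Import all_classical all_reals all_analysis.
From mathcomp Require Import ring lra.
Import Order.TTheory GRing.Theory Num.Theory.
Import numFieldNormedType.Exports.
Local Open Scope classical_set_scope.
Local Open Scope ring_scope.
Set Implicit Arguments. Unset Strict Implicit. Unset Printing Implicit Defensive.

Section EuclideanNorm.
Variables (R : realType) (n : nat).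
Local Notation V := 'rV[R]_n.
Implicit Types x y z : V.

Definition dot x y : R := \sum_(i < n) x ord0 i * y ord0 i.

Lemma dotC x y : dot x y = dot y x.
Proof. by apply: eq_bigr => i _; rewrite mulrC. Qed.
Lemma dotDl x y z : dot (x + y) z = dot x z + dot y z.
Proof. by rewrite /dot -big_split; apply: eq_bigr => i _; rewrite !mxE mulrDl. Qed.
Lemma dotNl x y : dot (- x) y = - dot x y.
Proof. by rewrite /dot -sumrN; apply: eq_bigr => i _; rewrite !mxE mulNr. Qed.
Lemma dotZl c x y : dot (c *: x) y = c * dot x y.
Proof. by rewrite /dot mulr_sumr; apply: eq_bigr => i _; rewrite !mxE mulrA. Qed.
Lemma dotBl x y z : dot (x - y) z = dot x z - dot y z.
Proof. by rewrite dotDl dotNl. Qed.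
Lemma dotDr x y z : dot z (x + y) = dot z x + dot z y.
Proof. by rewrite dotC dotDl !(dotC z). Qed.
Lemma dotBr x y z : dot z (x - y) = dot z x - dot z y.
Proof. by rewrite dotC dotBl !(dotC z). Qed.
Lemma dotZr c x y : dot y (c *: x) = c * dot y x.
Proof. by rewrite dotC dotZl dotC. Qed.
Lemma dot0l x : dot 0 x = 0.
Proof. by rewrite /dot big1 // => i _; rewrite mxE mul0r. Qed.
Lemma dotxx_ge0 x : 0 <= dot x x.
Proof. by apply: sumr_ge0 => i _; rewrite -expr2 sqr_ge0. Qed.

Lemma dot_expandD x y : dot (x + y) (x + y) = dot x x + 2 * dot x y + dot y y.
Proof. by rewrite !dotDl !dotDr (dotC y x); ring. Qed.
Lemma dot_expandB x y : dot (x - y) (x - y) = dot x x - 2 * dot x y + dot y y.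
Proof. by rewrite !dotBl !dotBr (dotC y x); ring. Qed.

Lemma enormE x : enorm x = Num.sqrt (dot x x).
Proof. by rewrite /enorm /dot; congr Num.sqrt; apply: eq_bigr => i _; rewrite expr2. Qed.
Lemma enorm_sqr x : enorm x ^+ 2 = dot x x.
Proof. by rewrite enormE sqr_sqrtr // dotxx_ge0. Qed.
Lemma enorm_ge0 x : 0 <= enorm x.
Proof. exact: sqrtr_ge0. Qed.
Lemma enorm0 : enorm (0 : V) = 0.
Proof. by rewrite enormE dot0l sqrtr0. Qed.

Lemma enorm_eq0 x : enorm x = 0 -> x = 0.
Proof.
rewrite enormE => /eqP; rewrite sqrtr_eq0 => xx_le0.
have xx0 : dot x x = 0 by apply/le_anti; rewrite xx_le0 dotxx_ge0.
apply/matrixP => i j; rewrite (ord1 i) mxE.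
have : x ord0 j * x ord0 j = 0.
  apply: (@psumr_eq0P R _ xpredT (fun i => x ord0 i * x ord0 i) _ xx0 j isT).
  by move=> k _; rewrite -expr2 sqr_ge0.
by move/eqP; rewrite mulf_eq0 orbb => /eqP.
Qed.

Lemma enorm_gt0 x : x != 0 -> 0 < enorm x.
Proof.
by move=> x0; rewrite lt_neqAle enorm_ge0 andbT eq_sym; apply: contra x0 => /eqP/enorm_eq0->.
Qed.

Lemma enormZ c x : enorm (c *: x) = `|c| * enorm x.
Proof. by rewrite !enormE dotZl dotZr mulrA -expr2 sqrtrM ?sqr_ge0 // sqrtr_sqr. Qed.
Lemma enormN x : enorm (- x) = enorm x.
Proof. by rewrite -scaleN1r enormZ normrN normr1 mul1r. Qed.
Lemma enormB x y : enorm (x - y) = enorm (y - x).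
Proof. by rewrite -enormN opprB. Qed.

Lemma dot_le_enormM x y : dot x y <= enorm x * enorm y.
Proof.
have [yy0|yy0] := eqVneq (dot y y) 0.
  have -> : y = 0 by apply: enorm_eq0; rewrite enormE yy0 sqrtr0.
  by rewrite dotC dot0l enorm0 mulr0.
have yy_gt0 : 0 < dot y y by rewrite lt_neqAle eq_sym yy0 dotxx_ge0.
pose t := dot x y / dot y y.
(* expand [0 <= |x - t y|^2] at the minimising [t] *)
have := dotxx_ge0 (x - t *: y).
rewrite dot_expandB dotZr dotZl dotZr.
have -> : dot x x - 2 * (t * dot x y) + t * (t * dot y y) =
    (dot x x * dot y y - dot x y ^+ 2) / dot y y by rewrite /t; field.
rewrite pmulr_lge0 ?invr_gt0 // subr_ge0 => sq_le.
apply: (le_trans (ler_norm (dot x y))).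
by rewrite !enormE -sqrtrM ?dotxx_ge0 // -sqrtr_sqr ler_wsqrtr.
Qed.

Lemma enormD_le x y : enorm (x + y) <= enorm x + enorm y.
Proof.
rewrite {1}enormE -[enorm x + enorm y]ger0_norm ?addr_ge0 ?enorm_ge0 //.
rewrite -sqrtr_sqr ler_wsqrtr // dot_expandD sqrrD !enorm_sqr.
by rewrite lerD2r lerD2l; have := dot_le_enormM x y; lra.
Qed.
Lemma enormB_le x y : enorm (x - y) <= enorm x + enorm y.
Proof. by rewrite (le_trans (enormD_le _ _)) // enormN. Qed.
Lemma enormB_tri x y z : enorm (x - z) <= enorm (x - y) + enorm (y - z).
Proof. by rewrite (le_trans _ (enormD_le _ _)) // addrA subrK. Qed.

Lemma coord_le_enorm x i : `|x ord0 i| <= enorm x.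
Proof.
rewrite enormE -sqrtr_sqr ler_wsqrtr // /dot (bigD1 i) //= -expr2 lerDl.
by apply: sumr_ge0 => k _; rewrite -expr2 sqr_ge0.
Qed.

Lemma enorm_le_coord x h : 0 <= h -> (forall i, `|x ord0 i| <= h) ->
  enorm x <= n%:R * h.
Proof.
move=> h0 hx; rewrite enormE.
rewrite -[n%:R * h]ger0_norm ?mulr_ge0 // -sqrtr_sqr ler_wsqrtr //.
apply: (@le_trans _ _ (\sum_(i < n) h ^+ 2)).
  apply: ler_sum => i _; rewrite -expr2 -real_normK ?num_real //.
  by rewrite lerXn2r // ?nnegrE ?normr_ge0.
rewrite sumr_const card_ord exprMn -[h ^+ 2 *+ n]mulr_natl ler_wpM2r ?sqr_ge0 //.
case: n => [|m]; first by rewrite expr2 mulr0.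
by rewrite expr2 ler_peMr // ler1n.
Qed.

Lemma enorm_dim0 x : n = 0%N -> enorm x = 0.
Proof.
move=> n0; rewrite /enorm big1 ?sqrtr0 // => i _; exfalso.
by move: (ltn_ord i); move: (nat_of_ord i) => k; rewrite n0.
Qed.

End EuclideanNorm.

Section Inversion.
Variables (R : realType) (n : nat).
Local Notation V := 'rV[R]_n.
Implicit Types a b x y z w : V.
Local Notation Phi := (@inversion R n 0).

Lemma inversion0E x : Phi x = (enorm x ^+ 2)^-1 *: x.
Proof. by rewrite /inversion subr0. Qed.
Lemma inversionE w x : inversion w x = Phi (x - w).
Proof. by rewrite inversion0E. Qed.

Lemma enorm_inversion0 x : enorm (Phi x) = (enorm x)^-1.
Proof.
rewrite inversion0E enormZ ger0_norm ?invr_ge0 ?sqr_ge0 //.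
have [->|x0] := eqVneq x 0; first by rewrite enorm0 invr0 mulr0.
by rewrite expr2 invfM -mulrA mulVf ?mulr1 // gt_eqF ?enorm_gt0.
Qed.

Lemma inversion0K : involutive Phi.
Proof.
move=> x; have [->|x0] := eqVneq x 0; first by rewrite !inversion0E !scaler0.
rewrite [Phi (Phi x)]inversion0E enorm_inversion0 [Phi x]inversion0E scalerA.
by rewrite exprVn invrK mulfV ?scale1r // expf_neq0 // gt_eqF ?enorm_gt0.
Qed.

Lemma inversion0_eq0 x : (Phi x == 0) = (x == 0).
Proof.
apply/eqP/eqP => [Phix0|->]; last by rewrite inversion0E scaler0.
by rewrite -(inversion0K x) Phix0 inversion0E scaler0.
Qed.

Lemma inversion0N x : Phi (- x) = - Phi x.
Proof. by rewrite !inversion0E enormN scalerN. Qed.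

Lemma enorm_inversion0B a b : a != 0 -> b != 0 ->
  enorm (Phi a - Phi b) = enorm (a - b) / (enorm a * enorm b).
Proof.
move=> a0 b0; have aa0 : dot a a != 0 by rewrite -enorm_sqr sqrf_eq0 gt_eqF ?enorm_gt0.
have bb0 : dot b b != 0 by rewrite -enorm_sqr sqrf_eq0 gt_eqF ?enorm_gt0.
apply/eqP; rewrite -(@eqrXn2 _ 2) ?divr_ge0 ?mulr_ge0 ?enorm_ge0 //.
rewrite expr_div_n exprMn !enorm_sqr !dot_expandB !inversion0E.
by rewrite !(dotZl, dotZr) !enorm_sqr; apply/eqP; field; rewrite aa0 bb0.
Qed.

Lemma enorm_inversion0_subr w y : w != 0 -> y != 0 ->
  enorm (Phi y - w) = enorm w * enorm (y - Phi w) / enorm y.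
Proof.
move=> w0 y0; have w_gt0 := enorm_gt0 w0; have y_gt0 := enorm_gt0 y0.
rewrite -{1}(inversion0K w) enorm_inversion0B ?inversion0_eq0 // enorm_inversion0.
by field; rewrite !gt_eqF.
Qed.

(* [inversion w \o Phi], a Moebius map; it is set to 0 at 0, where [Phi y] blows up,
   so that it is continuous there. *)
Definition reinversion w y : V := if y == 0 then 0 else Phi (Phi y - w).

Lemma reinversion_inversion w a : a != w -> reinversion (- w) (inversion w a) = Phi a.
Proof.
move=> aw; have aw0 : a - w != 0 by rewrite subr_eq0.
by rewrite inversionE /reinversion inversion0_eq0 (negbTE aw0) inversion0K opprK subrK.
Qed.

Lemma reinversionK w y : y != - Phi w -> reinversion w (reinversion (- w) y) = y.
Proof.
move=> yw; rewrite /reinversion; have [->|y0] := eqVneq y 0; first by rewrite eqxx.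
have yw0 : Phi y - - w != 0.
  rewrite opprK; apply: contra yw; rewrite addr_eq0 => /eqP yw.
  by rewrite -(inversion0K y) yw inversion0N.
by rewrite inversion0_eq0 (negbTE yw0) inversion0K opprK addrK inversion0K.
Qed.

Lemma enorm_reinversionB w y z : w != 0 -> y != Phi w -> z != Phi w ->
  enorm (reinversion w y - reinversion w z) =
  enorm (y - z) / (enorm w ^+ 2 * enorm (y - Phi w) * enorm (z - Phi w)).
Proof.
move=> w0 yw zw; have w_gt0 := enorm_gt0 w0.
have y_gt0 : 0 < enorm (y - Phi w) by rewrite enorm_gt0 // subr_eq0.
have z_gt0 : 0 < enorm (z - Phi w) by rewrite enorm_gt0 // subr_eq0.
have Phiw : enorm (Phi w) = (enorm w)^-1 by rewrite enorm_inversion0.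
have shift_neq0 u : u != 0 -> u != Phi w -> Phi u - w != 0.
  by move=> u0; apply: contra; rewrite subr_eq0 => /eqP <-; rewrite inversion0K.
rewrite /reinversion; have [y0|y0] := eqVneq y 0; have [z0|z0] := eqVneq z 0.
- by rewrite y0 z0 !subrr enorm0 mul0r.
- have z'_gt0 := enorm_gt0 z0.
  rewrite sub0r enormN enorm_inversion0 enorm_inversion0_subr // y0 !sub0r !enormN Phiw.
  by field; rewrite !gt_eqF.
- have y'_gt0 := enorm_gt0 y0.
  rewrite subr0 enorm_inversion0 enorm_inversion0_subr // z0 !subr0 sub0r enormN Phiw.
  by field; rewrite !gt_eqF.
- have y'_gt0 := enorm_gt0 y0; have z'_gt0 := enorm_gt0 z0.
  rewrite enorm_inversion0B ?shift_neq0 // opprB addrA subrK enorm_inversion0B //.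
  by rewrite !enorm_inversion0_subr //; field; rewrite !gt_eqF.
Qed.

End Inversion.

Section OuterMeasure.
Variables (R : realType) (n : nat).
Local Notation V := 'rV[R]_n.
Implicit Types E F : set V.

Lemma box_vol_ge0 (a b : V) : 0 <= box_vol a b.
Proof. by apply: prodr_ge0 => i _; rewrite le_max lexx. Qed.

Lemma outer_le_cover E (a b : nat -> V) : E `<=` \bigcup_k box (a k) (b k) ->
  (lebesgue_outer E <= \sum_(0 <= k <oo) (box_vol (a k) (b k))%:E)%E.
Proof. by move=> cover; apply: ereal_inf_lbound; exists a, b. Qed.

Lemma outer_ge0 E : (0 <= lebesgue_outer E)%E.
Proof.
apply: le_ereal_inf_tmp => _ [a [b [_ ->]]].
by apply: nneseries_ge0 => k _ _; rewrite lee_fin box_vol_ge0.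
Qed.

Lemma le_outer E F : E `<=` F -> (lebesgue_outer E <= lebesgue_outer F)%E.
Proof.
move=> EF; apply: ereal_inf_le_tmp => x [a [b [cover ->]]]; exists a, b.
by split => //; apply: subset_trans cover.
Qed.

Section FlattenCovers.
Variable s : nat -> seq (V * V).
Hypothesis s_neq0 : forall k, s k != [::].

Definition cover_prefix K := flatten (map s (iota 0 K)).

Lemma cover_prefixS K : cover_prefix K.+1 = cover_prefix K ++ s K.
Proof. by rewrite /cover_prefix -[K.+1]addn1 iotaD map_cat flatten_cat /= cats0. Qed.

Lemma size_cover_prefix K : (K <= size (cover_prefix K))%N.
Proof.
elim: K => // K IH; rewrite cover_prefixS size_cat -[K.+1]addn1 leq_add //.
by rewrite lt0n size_eq0.
Qed.

Lemma cover_prefix_cat K K' : (K <= K')%N -> exists r, cover_prefix K' = cover_prefix K ++ r.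
Proof.
move/subnK <-; elim: (K' - K)%N => [|m [r IH]]; first by exists [::]; rewrite cats0.
by exists (r ++ s (m + K)); rewrite addSn cover_prefixS IH catA.
Qed.

Variable d : V * V.

(* the countable family of boxes obtained by concatenating the finite families [s k] *)
Definition flat_cover j := nth d (cover_prefix j.+1) j.

Lemma flat_coverE K j : (j < size (cover_prefix K))%N ->
  flat_cover j = nth d (cover_prefix K) j.
Proof.
move=> jK; have [r1 e1] := cover_prefix_cat (leq_maxl K j.+1).
have [r2 e2] := cover_prefix_cat (leq_maxr K j.+1).
have jS : (j < size (cover_prefix j.+1))%N := size_cover_prefix j.+1.
rewrite /flat_cover.
have <- : nth d (cover_prefix (maxn K j.+1)) j = nth d (cover_prefix j.+1) j.
  by rewrite e2 nth_cat jS.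
by rewrite e1 nth_cat jK.
Qed.

Lemma sum_flat_cover K :
  \sum_(0 <= j < size (cover_prefix K)) box_vol (flat_cover j).1 (flat_cover j).2
  = \sum_(0 <= k < K) \sum_(q <- s k) box_vol q.1 q.2.
Proof.
transitivity (\sum_(0 <= j < size (cover_prefix K))
   box_vol (nth d (cover_prefix K) j).1 (nth d (cover_prefix K) j).2).
  by apply: eq_big_nat => j /andP[_ jK]; rewrite (flat_coverE jK).
rewrite -(big_nth d xpredT (fun q => box_vol q.1 q.2)).
by rewrite /cover_prefix big_flatten big_map /index_iota subn0.
Qed.

Lemma nneseries_flat_cover_le :
  (\sum_(0 <= j <oo) (box_vol (flat_cover j).1 (flat_cover j).2)%:E <=
   \sum_(0 <= k <oo) (\sum_(q <- s k) box_vol q.1 q.2)%:E)%E.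
Proof.
apply: lime_le; first by apply: is_cvg_nneseries => j _ _; rewrite lee_fin box_vol_ge0.
near=> N; rewrite sumEFin.
apply: (@le_trans _ _ (\sum_(0 <= j < size (cover_prefix N))
   box_vol (flat_cover j).1 (flat_cover j).2)%:E).
  rewrite lee_fin (big_cat_nat (leq0n N) (size_cover_prefix N)) /= lerDl.
  by apply: sumr_ge0 => j _; exact: box_vol_ge0.
rewrite sum_flat_cover -sumEFin; apply: nneseries_lim_ge => k _ _.
by rewrite lee_fin; apply: sumr_ge0 => q _; exact: box_vol_ge0.
Unshelve. all: by end_near.
Qed.

Lemma mem_flat_cover x k q : q \in s k -> box q.1 q.2 x ->
  exists j, box (flat_cover j).1 (flat_cover j).2 x.
Proof.
move=> qs xq; have qlt := qs; rewrite -index_mem in qlt.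
exists (size (cover_prefix k) + index q (s k))%N.
rewrite (@flat_coverE k.+1) ?cover_prefixS ?nth_cat ?size_cat ?ltn_add2l //.
by rewrite ltnNge leq_addr /= addKn nth_index.
Qed.

End FlattenCovers.

Lemma outer_le_nneseries_covers E (s : nat -> seq (V * V)) :
  (forall k, s k != [::]) ->
  (forall x, E x -> exists k, exists2 q, q \in s k & box q.1 q.2 x) ->
  (lebesgue_outer E <= \sum_(0 <= k <oo) (\sum_(q <- s k) box_vol q.1 q.2)%:E)%E.
Proof.
move=> s_neq0 cover; apply: le_trans (nneseries_flat_cover_le s_neq0 (0, 0)).
apply: outer_le_cover => x /cover [k [q qs xq]].
by have [j xj] := mem_flat_cover s_neq0 (0, 0) qs xq; exists j.
Qed.

End OuterMeasure.

Section ProductBounds.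
Variable R : realType.

Lemma prod_le_exp (I : Type) (r : seq I) (F : I -> R) (T : R) :
  (forall i, 0 <= F i <= T) -> \prod_(i <- r) F i <= T ^+ size r.
Proof.
move=> F_bd; elim: r => [|i r IH]; first by rewrite big_nil expr0.
rewrite big_cons exprS; have /andP[Fi0 FiT] := F_bd i.
by apply: ler_pM => //; apply: prodr_ge0 => j _; have /andP[] := F_bd j.
Qed.

Lemma prod_addr_le (I : Type) (r : seq I) (F : I -> R) (S h : R) :
  (forall i, 0 <= F i <= S) -> 0 <= h <= 1 ->
  \prod_(i <- r) (F i + h) <= \prod_(i <- r) F i + h * (size r)%:R * (S + 1) ^+ size r.
Proof.
move=> F_bd /andP[h0 h1]; elim: r => [|i r IH]; first by rewrite !big_nil mulr0 mul0r addr0.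
rewrite !big_cons /=.
set P := \prod_(j <- r) F j; set Q := \prod_(j <- r) (F j + h).
set k := size r; set T := (S + 1) ^+ k.
have P0 : 0 <= P by apply: prodr_ge0 => j _; have /andP[] := F_bd j.
have QT : Q <= T by apply: prod_le_exp => j; have /andP[? ?] := F_bd j; rewrite addr_ge0 ?lerD.
have /andP[Fi0 FiS] := F_bd i.
have S0 : 0 <= S := le_trans Fi0 FiS.
have T0 : 0 <= T by rewrite exprn_ge0 // addr_ge0.
have hkT0 : 0 <= h * k%:R * T by rewrite !mulr_ge0.
have hT0 : 0 <= S * (h * T) by rewrite !mulr_ge0.
have FihkT : F i * (h * k%:R * T) <= S * (h * k%:R * T) by rewrite ler_wpM2r.
have : (F i + h) * Q <= F i * (P + h * k%:R * T) + h * T.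
  by rewrite mulrDl lerD // ler_wpM2l.
move/le_trans; apply.
rewrite exprS -/T -addn1 natrD mulrDr.
have -> : h * (k%:R + 1) * ((S + 1) * T) =
  S * (h * k%:R * T) + h * k%:R * T + S * (h * T) + h * T by ring.
lra.
Qed.

Lemma prod_addr_approx (n : nat) (l : 'I_n -> R) (d : R) :
  (forall i, 0 <= l i) -> 0 < d ->
  exists2 h, 0 < h & \prod_(i < n) (l i + h) <= \prod_(i < n) l i + d.
Proof.
move=> l0 d_gt0; set S := \sum_(i < n) l i.
have l_bd i : 0 <= l i <= S by rewrite l0 /S (bigD1 i) //= lerDl sumr_ge0.
have S0 : 0 <= S by apply: sumr_ge0.
set C := n%:R * (S + 1) ^+ n.
have C0 : 0 <= C by rewrite mulr_ge0 // exprn_ge0 // addr_ge0.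
set h := Num.min 1 (d / (C + 1)).
have h_gt0 : 0 < h by rewrite lt_min ltr01 divr_gt0 // ltr_wpDl.
have h1 : h <= 1 by rewrite ge_min lexx.
have hC : h * (C + 1) <= d by rewrite -ler_pdivlMr ?ltr_wpDl // ge_min lexx orbT.
exists h => //.
have size_enum : size (index_enum 'I_n) = n.
  by rewrite -[in RHS](card_ord n) cardT enumT /index_enum; case: index_enum_key.
have := @prod_addr_le _ (index_enum 'I_n) l S h l_bd.
rewrite (ltW h_gt0) h1 size_enum -/C => /(_ isT) /le_trans; apply.
by rewrite lerD2l -mulrA -/C; move: hC; rewrite mulrDr mulr1; lra.
Qed.

Lemma sum_ord_indicator (M N : nat) : (N <= M)%N -> \sum_(j < M) ((j < N)%N)%:R = N%:R :> R.
Proof.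
move=> NM; have := @big_ord_widen R 0 +%R N M (fun _ => 1) NM.
rewrite sumr_const card_ord => ->.
by rewrite [in RHS]big_mkcond; apply: eq_bigr => j _; case: (j < N)%N.
Qed.

End ProductBounds.

Section LipschitzImage.
Variables (R : realType) (n : nat).
Local Notation V := 'rV[R]_n.
Hypothesis n_gt0 : (0 < n)%N.
Variables (U : set V) (g : V -> V) (L : R).
Hypothesis L_gt0 : 0 < L.
Hypothesis g_lip : forall x y, U x -> U y -> enorm (g x - g y) <= L * enorm (x - y).

Definition lipschitz_outer_factor := (2 * L * n%:R) ^+ n.

Lemma lipschitz_outer_factor_gt0 : 0 < lipschitz_outer_factor.
Proof. by rewrite exprn_gt0 // !mulr_gt0 // ltr0n. Qed.

Lemma box_vol_diag (p : V) : box_vol p p = 0.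
Proof. by rewrite /box_vol (bigD1 (Ordinal n_gt0)) //= subrr maxxx mul0r. Qed.

(* [box a b] is cut into cubes of side [h]; the image of each cube that meets [U]
   lies in a cube of side [2 L n h] around the image of one of its points. *)
Section GridCover.
Variables (a b : V) (h : R).
Hypothesis h_gt0 : 0 < h.

Definition grid_side i := Num.max 0 (b ord0 i - a ord0 i).
Definition grid_steps i := (Num.truncn (grid_side i / h)).+1.
(* a common bound for the number of steps in every direction *)
Definition grid_size := (\sum_(i < n) grid_steps i)%N.
Local Notation cell := {ffun 'I_n -> 'I_grid_size}.

Definition cell_lo (t : cell) : V := \row_i (a ord0 i + h * (t i)%:R).
Definition cell_hi (t : cell) : V := \row_i (a ord0 i + h * (t i)%:R + h).
Definition in_cell t x := [/\ box (cell_lo t) (cell_hi t) x, box a b x & U x].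

Definition image_radius := L * n%:R * h.

Definition cell_image t : V * V :=
  match pselect (exists x, in_cell t x) with
  | left ex => let x := projT1 (cid ex) in
      (g x - const_mx image_radius, g x + const_mx image_radius)
  | right _ => (0, 0)
  end.

Lemma grid_side_ge0 i : 0 <= grid_side i.
Proof. by rewrite le_max lexx. Qed.

Lemma grid_steps_le_size i : (grid_steps i <= grid_size)%N.
Proof. by rewrite /grid_size (bigD1 i) //= leq_addr. Qed.

Lemma box_sub_cells x : box a b x -> exists t, box (cell_lo t) (cell_hi t) x.
Proof.
move=> xab; have u_ge0 i : 0 <= (x ord0 i - a ord0 i) / h.
  by have /andP[ax _] := xab i; rewrite divr_ge0 ?subr_ge0 // ltW.
have t_lt i : (Num.truncn ((x ord0 i - a ord0 i) / h) < grid_size)%N.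
  apply: leq_trans (grid_steps_le_size i); rewrite ltnS; apply: le_truncn.
  rewrite ler_pM2r ?invr_gt0 // le_max; apply/orP; right.
  by have /andP[_ xb] := xab i; rewrite lerD2r.
exists [ffun i => Ordinal (t_lt i)] => i; rewrite !mxE ffunE /=.
have /andP[t1 t2] := truncn_itv (u_ge0 i).
have xE : x ord0 i = a ord0 i + h * ((x ord0 i - a ord0 i) / h).
  by field; rewrite gt_eqF.
apply/andP; split; first by rewrite [leRHS]xE lerD2l ler_pM2l.
rewrite [leLHS]xE -addrA lerD2l -[X in _ <= _ + X]mulr1 -mulrDr ler_pM2l //.
by rewrite natr1 ltW.
Qed.

Lemma image_radius_ge0 : 0 <= image_radius.
Proof. by rewrite !mulr_ge0 // ltW. Qed.

Lemma cell_image_cover t x : in_cell t x -> box (cell_image t).1 (cell_image t).2 (g x).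
Proof.
move=> xt; rewrite /cell_image; case: pselect => [ex|]; last by move=> /(_ (ex_intro _ x xt)).
case: (cid ex) => y [yt yab Uy] /=; have [xt' _ Ux] := xt.
have gxy : enorm (g x - g y) <= image_radius.
  apply: (le_trans (g_lip Ux Uy)); rewrite /image_radius -mulrA ler_pM2l //.
  apply: enorm_le_coord; first exact: ltW.
  move=> i; rewrite !mxE ler_norml.
  by have := yt i; have := xt' i; rewrite !mxE => /andP[? ?] /andP[? ?]; apply/andP; split; lra.
move=> i; rewrite !mxE; have := le_trans (coord_le_enorm (g x - g y) i) gxy.
by rewrite !mxE ler_norml => /andP[? ?]; apply/andP; split; lra.
Qed.

Lemma box_vol_cell_image t :
  box_vol (cell_image t).1 (cell_image t).2 <=
  lipschitz_outer_factor * h ^+ n * \prod_(i < n) ((t i < grid_steps i)%N)%:R.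
Proof.
have fac0 : 0 <= lipschitz_outer_factor * h ^+ n.
  by apply: mulr_ge0; [exact: ltW lipschitz_outer_factor_gt0 | exact: exprn_ge0 (ltW h_gt0)].
rewrite /cell_image; case: pselect => [ex|_]; last first.
  by rewrite box_vol_diag mulr_ge0 // prodr_ge0 // => i _; case: (t i < grid_steps i)%N.
case: (cid ex) => y [yt yab Uy] /=.
have -> : \prod_(i < n) ((t i < grid_steps i)%N)%:R = 1 :> R.
  (* a cell meeting [box a b] has all its indices below [grid_steps] *)
  apply: big1 => i _; suff -> : (t i < grid_steps i)%N by [].
  rewrite /grid_steps ltnS (truncn_ge_nat _ (divr_ge0 (grid_side_ge0 i) (ltW h_gt0))).
  rewrite ler_pdivlMr // mulrC le_max; apply/orP; right.
  by have := yt i; have := yab i; rewrite !mxE => /andP[? ?] /andP[? ?]; lra.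
rewrite mulr1 /box_vol (eq_bigr (fun _ => 2 * image_radius)); last first.
  move=> i _; rewrite !mxE.
  have -> : g y ord0 i + image_radius - (g y ord0 i - image_radius) = 2 * image_radius.
    by ring.
  by rewrite max_r // mulr_ge0 // image_radius_ge0.
by rewrite prodr_const card_ord /lipschitz_outer_factor /image_radius -exprMn !mulrA.
Qed.

Lemma sum_box_vol_cell_image :
  \sum_(t : cell) box_vol (cell_image t).1 (cell_image t).2 <=
  lipschitz_outer_factor * \prod_(i < n) (grid_side i + h).
Proof.
apply: le_trans (ler_sum _ (fun t _ => box_vol_cell_image t)) _.
rewrite -mulr_sumr -(bigA_distr_bigA (fun i (j : 'I_grid_size) => ((j < grid_steps i)%N)%:R : R)).
under eq_bigr do rewrite sum_ord_indicator ?grid_steps_le_size //.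
rewrite -mulrA ler_pM2l ?lipschitz_outer_factor_gt0 //.
have -> : h ^+ n = \prod_(i < n) h by rewrite prodr_const card_ord.
rewrite -big_split /=; apply: ler_prod => i _.
apply/andP; split; first by rewrite mulr_ge0 // ltW.
rewrite /grid_steps -natr1 mulrDr mulr1 lerD2r mulrC -ler_pdivlMr //.
by rewrite truncn_le divr_ge0 // ?grid_side_ge0 // ltW.
Qed.

End GridCover.

Lemma lipschitz_image_box_cover (a b : V) (d : R) : 0 < d ->
  exists s : seq (V * V), [/\ s != [::],
    (forall x, box a b x -> U x -> exists2 q, q \in s & box q.1 q.2 (g x)) &
    \sum_(q <- s) box_vol q.1 q.2 <= lipschitz_outer_factor * (box_vol a b + d)].
Proof.
move=> d_gt0; have [h h_gt0 side_h] := prod_addr_approx (grid_side_ge0 a b) d_gt0.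
(* the dummy box [(0, 0)] of volume 0 makes the family nonempty *)
exists ((0, 0) :: [seq cell_image t | t <- index_enum {ffun 'I_n -> 'I_(grid_size a b h)}]).
split => //.
- move=> x xab Ux; have [t xt] := box_sub_cells h_gt0 xab.
  exists (cell_image t); first by rewrite in_cons map_f ?mem_index_enum ?orbT.
  exact: cell_image_cover.
- rewrite big_cons box_vol_diag add0r big_map.
  apply: (le_trans (sum_box_vol_cell_image _ _ h_gt0)).
  by rewrite ler_pM2l ?lipschitz_outer_factor_gt0.
Qed.

Lemma outer_lipschitz_image :
  (lebesgue_outer (g @` U) <= lipschitz_outer_factor%:E * lebesgue_outer U)%E.
Proof.
have fac_gt0 := lipschitz_outer_factor_gt0.
case EU: (lebesgue_outer U) (outer_ge0 U) => [r| |] // r0; last first.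
  by rewrite mulry gtr0_sg // mul1e leey.
apply/lee_addgt0Pr => e e_gt0.
pose eta := e / (2 * lipschitz_outer_factor).
have eta_gt0 : 0 < eta by rewrite divr_gt0 // mulr_gt0.
have : (lebesgue_outer U < (r + eta)%:E)%E by rewrite EU lte_fin ltrDl.
move=> /ereal_inf_lt [_ [a [b [cover ->]]] cover_lt].
have pow2_gt0 k : 0 < (2 ^ k.+1)%:R :> R by rewrite ltr0n expn_gt0.
have /choice [s s_cover] := fun k =>
  lipschitz_image_box_cover (a k) (b k) (divr_gt0 eta_gt0 (pow2_gt0 k)).
have s_neq0 k : s k != [::] by have [] := s_cover k.
apply: le_trans (outer_le_nneseries_covers s_neq0 _) _.
  move=> _ [u Uu <-]; have [k _ uk] := cover u Uu.
  by exists k; have [_ + _] := s_cover k; apply.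
apply: (@le_trans _ _ (\sum_(0 <= k <oo)
    (lipschitz_outer_factor * (box_vol (a k) (b k) + eta / (2 ^ k.+1)%:R))%:E)%E).
  apply: lee_nneseries => [k _ _|k _]; first by rewrite lee_fin sumr_ge0 // => q _; exact: box_vol_ge0.
  by rewrite lee_fin; have [] := s_cover k.
under eq_eseriesr do rewrite EFinM.
rewrite nneseriesZl => [|k _]; last by rewrite lee_fin addr_ge0 ?box_vol_ge0 // divr_ge0 // ltW.
under eq_eseriesr do rewrite EFinD.
apply: (@le_trans _ _ (lipschitz_outer_factor%:E *
    (\sum_(0 <= k <oo) (box_vol (a k) (b k))%:E + eta%:E))%E).
  rewrite lee_pmul2l ?lte_fin //.
  by apply: epsilon_trick => [k|]; [rewrite lee_fin box_vol_ge0 | exact: ltW].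
apply: (@le_trans _ _ (lipschitz_outer_factor%:E * ((r + eta)%:E + eta%:E))%E).
  by rewrite lee_pmul2l ?lte_fin // leeD2r // ltW.
rewrite -!EFinD -EFinM lee_fin (_ : _ * _ = lipschitz_outer_factor * r + e) //.
by rewrite /eta; field; rewrite gt_eqF.
Qed.

End LipschitzImage.

Section MinkowskiContent.
Variables (R : realType) (n : nat).
Local Notation V := 'rV[R]_n.
Local Open Scope ereal_scope.

Lemma mink_ratio_ge0 (B : set V) s e : 0 <= mink_ratio B s e.
Proof. by rewrite mule_ge0 ?outer_ge0 // lee_fin invr_ge0 powR_ge0. Qed.

Lemma upper_minkowski_ge0 (B : set V) s : 0 <= upper_minkowski B s.
Proof.
apply: le_ereal_inf_tmp => _ [d /= d_gt0 <-].
apply: le_ereal_sup_tmp; exists (mink_ratio B s (d / 2)); last exact: mink_ratio_ge0.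
by exists (d / 2)%R => //=; rewrite divr_gt0 // ltr_pdivrMr // ltr_pMr // ltr1n.
Qed.

Lemma lower_minkowski_ge0 (B : set V) s : 0 <= lower_minkowski B s.
Proof.
apply: le_ereal_sup_tmp.
exists (ereal_inf [set mink_ratio B s e | e in [set e : R | (0 < e < 1)%R]]).
  by exists 1%R => //=.
by apply: le_ereal_inf_tmp => _ [e _ <-]; exact: mink_ratio_ge0.
Qed.

Definition nbhd_outer_dominated (E F : set V) := exists K L δ,
  [/\ (0 < K)%R, (0 < L)%R, (0 < δ)%R & forall e, (0 < e)%R -> (e < δ)%R ->
    lebesgue_outer (eps_nbhd F e) <= K%:E * lebesgue_outer (eps_nbhd E (L * e))].

Lemma nbhd_outer_dominated_refl (E : set V) : nbhd_outer_dominated E E.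
Proof. by exists 1%R, 1%R, 1%R; split => // e _ _; rewrite mul1r mul1e. Qed.

Section Transfer.
Variables (E F : set V) (K L δ : R).
Hypotheses (K_gt0 : (0 < K)%R) (L_gt0 : (0 < L)%R) (δ_gt0 : (0 < δ)%R).
Hypothesis nbhd_le : forall e, (0 < e)%R -> (e < δ)%R ->
  lebesgue_outer (eps_nbhd F e) <= K%:E * lebesgue_outer (eps_nbhd E (L * e)).

Lemma mink_ratio_transfer s e : (0 < e)%R -> (e < δ)%R ->
  mink_ratio F s e <= (K * L `^ (n%:R - s))%:E * mink_ratio E s (L * e).
Proof.
move=> e_gt0 e_lt; rewrite /mink_ratio muleCA -EFinM.
have -> : (K * L `^ (n%:R - s) * ((L * e) `^ (n%:R - s))^-1 =
           K * (e `^ (n%:R - s))^-1)%R.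
  have := powR_gt0 (n%:R - s) e_gt0; have := powR_gt0 (n%:R - s) L_gt0.
  by rewrite powRM ?ltW // => ? ?; field; rewrite !gt_eqF.
rewrite EFinM muleA [lebesgue_outer (eps_nbhd E _) * _]muleC.
by apply: lee_wpmul2r; [rewrite lee_fin invr_ge0 powR_ge0 | exact: nbhd_le].
Qed.

Let C s := (K * L `^ (n%:R - s))%R.

Let C_gt0 s : (0 < C s)%R.
Proof. by rewrite mulr_gt0 // powR_gt0. Qed.

Let scale_small s (x : \bar R) eta : (0 < eta)%R -> x <= (eta / C s)%:E ->
  (C s)%:E * x <= eta%:E.
Proof.
move=> eta_gt0 x_le; apply: le_trans (lee_wpmul2l _ x_le) _.
  by rewrite lee_fin ltW.
by rewrite -EFinM lee_fin mulrC divfK // gt_eqF.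
Qed.

Lemma upper_minkowski_eq0_transfer s :
  upper_minkowski E s = 0 -> upper_minkowski F s = 0.
Proof.
move=> E0; apply/le_anti; rewrite upper_minkowski_ge0 andbT.
apply/lee_addgt0Pr => eta eta_gt0; rewrite add0e.
have : upper_minkowski E s < (eta / C s)%:E by rewrite E0 lte_fin divr_gt0.
move=> /ereal_inf_lt [_ [d /= d_gt0 <-] sup_lt].
pose d' := Num.min δ (d / L)%R.
have d'_gt0 : (0 < d')%R by rewrite lt_min δ_gt0 divr_gt0.
apply: (@le_trans _ _ (ereal_sup [set mink_ratio F s e | e in [set e | (0 < e < d')%R]])).
  by apply: ereal_inf_lbound; exists d'.
apply: ge_ereal_sup => _ [e /= /andP[e_gt0 e_lt] <-].
have e_ltδ : (e < δ)%R by apply: lt_le_trans e_lt _; rewrite ge_min lexx.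
apply: (le_trans (mink_ratio_transfer s e_gt0 e_ltδ)); apply: scale_small => //.
apply: ltW; apply: le_lt_trans sup_lt; apply: ereal_sup_ubound.
exists (L * e)%R => //=; rewrite mulr_gt0 //= mulrC -ltr_pdivlMr //.
by apply: lt_le_trans e_lt _; rewrite ge_min lexx orbT.
Qed.

Lemma lower_minkowski_eq0_transfer s :
  lower_minkowski E s = 0 -> lower_minkowski F s = 0.
Proof.
move=> E0; apply/le_anti; rewrite lower_minkowski_ge0 andbT.
apply: ge_ereal_sup => _ [d /= d_gt0 <-].
apply/lee_addgt0Pr => eta eta_gt0; rewrite add0e.
pose m := Num.min δ d.
have m_gt0 : (0 < m)%R by rewrite lt_min δ_gt0 d_gt0.
have : ereal_inf [set mink_ratio E s e | e in [set e | (0 < e < L * m)%R]] < (eta / C s)%:E.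
  apply: (@le_lt_trans _ _ 0); last by rewrite lte_fin divr_gt0.
  by rewrite -E0; apply: ereal_sup_ubound; exists (L * m)%R => //=; rewrite mulr_gt0.
move=> /ereal_inf_lt [_ [e' /= /andP[e'_gt0 e'_lt] <-] e'_ratio].
pose e := (e' / L)%R.
have e_gt0 : (0 < e)%R by rewrite divr_gt0.
have e_lt : (e < m)%R by rewrite ltr_pdivrMr // mulrC.
have Le : (L * e = e')%R by rewrite /e mulrC divfK // gt_eqF.
apply: (@le_trans _ _ (mink_ratio F s e)).
  apply: ereal_inf_lbound; exists e => //=; rewrite e_gt0 /=.
  by apply: lt_le_trans e_lt _; rewrite ge_min lexx orbT.
have e_ltδ : (e < δ)%R by apply: lt_le_trans e_lt _; rewrite ge_min lexx.
apply: (le_trans (mink_ratio_transfer s e_gt0 e_ltδ)); apply: scale_small => //.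
by rewrite Le ltW.
Qed.

End Transfer.

Lemma box_dims_eq (E F : set V) :
  (forall s, upper_minkowski E s = 0 <-> upper_minkowski F s = 0) ->
  (forall s, lower_minkowski E s = 0 <-> lower_minkowski F s = 0) ->
  upper_box_dim E = upper_box_dim F /\ lower_box_dim E = lower_box_dim F.
Proof.
move=> upperEF lowerEF; split; congr ereal_inf; congr image.
- by apply/seteqP; split => s [s0 h]; split => //; apply/upperEF.
- by apply/seteqP; split => s [s0 h]; split => //; apply/lowerEF.
Qed.

Lemma box_dims_eq_dominated (E F : set V) :
  nbhd_outer_dominated E F -> nbhd_outer_dominated F E ->
  upper_box_dim E = upper_box_dim F /\ lower_box_dim E = lower_box_dim F.
Proof.
move=> [K [L [δ [K_gt0 L_gt0 δ_gt0 FE]]]] [K' [L' [δ' [K'_gt0 L'_gt0 δ'_gt0 EF]]]].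
apply: box_dims_eq => s; split.
- exact: (upper_minkowski_eq0_transfer K_gt0 L_gt0 δ_gt0 FE).
- exact: (upper_minkowski_eq0_transfer K'_gt0 L'_gt0 δ'_gt0 EF).
- exact: (lower_minkowski_eq0_transfer K_gt0 L_gt0 δ_gt0 FE).
- exact: (lower_minkowski_eq0_transfer K'_gt0 L'_gt0 δ'_gt0 EF).
Qed.

End MinkowskiContent.

Lemma ler_pdiv_cross (R : realFieldType) (p q r s : R) :
  0 < q -> 0 < s -> p * s <= r * q -> p / q <= r / s.
Proof. by move=> q_gt0 s_gt0 psrq; rewrite ler_pdivrMr // mulrAC ler_pdivlMr. Qed.

Section InversionBounds.
Variables (R : realType) (n : nat).
Local Notation V := 'rV[R]_n.
Local Notation Phi := (@inversion R n 0).

Lemma enorm_subr_le (a c : V) (d : R) : 0 < d -> d <= enorm a ->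
  enorm (a - c) <= enorm a * (1 + enorm c / d).
Proof.
move=> d_gt0 da; apply: (le_trans (enormB_le a c)).
rewrite mulrDr mulr1 lerD2l mulrA ler_pdivlMr //.
by rewrite [X in X <= _]mulrC ler_wpM2r ?enorm_ge0.
Qed.

Lemma enorm_inversion0B_ge (x y : V) (d : R) : 0 < d -> x != 0 -> y != 0 ->
  d <= enorm (x - y) -> d / ((d + enorm y) * enorm y) <= enorm (Phi x - Phi y).
Proof.
move=> d_gt0 x0 y0 dxy; have x_gt0 := enorm_gt0 x0; have y_gt0 := enorm_gt0 y0.
rewrite enorm_inversion0B //; apply: ler_pdiv_cross; rewrite ?mulr_gt0 ?addr_gt0 //.
have : enorm x <= enorm (x - y) * (1 + enorm y / d).
  by have := enorm_subr_le (- y) d_gt0 dxy; rewrite opprK subrK enormN.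
move=> /(ler_wpM2l (ltW d_gt0)).
have -> : d * (enorm (x - y) * (1 + enorm y / d)) = enorm (x - y) * (d + enorm y).
  by field; rewrite gt_eqF.
by move=> dx; rewrite mulrA [enorm (x - y) * _]mulrA ler_wpM2r // ltW.
Qed.

Lemma reinversion_lipschitz (w : V) (rho : R) x z : w != 0 -> 0 < rho ->
  rho <= enorm (x - Phi w) -> rho <= enorm (z - Phi w) ->
  enorm (reinversion w x - reinversion w z) <= (enorm w ^+ 2 * rho ^+ 2)^-1 * enorm (x - z).
Proof.
move=> w0 rho_gt0 rho_x rho_z; have w_gt0 := enorm_gt0 w0.
have x_gt0 := lt_le_trans rho_gt0 rho_x; have z_gt0 := lt_le_trans rho_gt0 rho_z.
have neq_Phiw u : 0 < enorm (u - Phi w) -> u != Phi w.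
  by apply: contraTneq => ->; rewrite subrr enorm0 ltxx.
rewrite enorm_reinversionB ?neq_Phiw // [X in _ <= X]mulrC.
apply: ler_wpM2l; first exact: enorm_ge0.
rewrite lef_pV2 ?posrE ?mulr_gt0 ?exprn_gt0 // -mulrA.
by apply: ler_wpM2l; [exact: sqr_ge0 | rewrite expr2; apply: ler_pM => //; exact: ltW].
Qed.

End InversionBounds.

Section InversionNeighbourhoods.
Variables (R : realType) (n : nat).
Local Notation V := 'rV[R]_n.
Local Notation Phi := (@inversion R n 0).
Variables (A : set V) (w : V) (d0 dw : R).
Hypotheses (d0_gt0 : 0 < d0) (dw_gt0 : 0 < dw) (w_neq0 : w != 0).
Hypothesis A_far0 : forall a, A a -> d0 <= enorm a.
Hypothesis A_farw : forall a, A a -> dw <= enorm (a - w).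

Let W := enorm w.
Let W_gt0 : 0 < W := enorm_gt0 w_neq0.

(* half of lower bounds for the distances from [Phi @` A] to [Phi w] and from
   [inversion w @` A] to [- Phi w] *)
Let rho := dw / ((dw + W) * W) / 2.
Let sig := d0 / ((d0 + W) * W) / 2.
Let rho_gt0 : 0 < rho. Proof. by rewrite !divr_gt0 ?mulr_gt0 ?addr_gt0. Qed.
Let sig_gt0 : 0 < sig. Proof. by rewrite !divr_gt0 ?mulr_gt0 ?addr_gt0. Qed.

Let A_neq0 a : A a -> a != 0.
Proof. by move=> /A_far0; apply: contraTneq => ->; rewrite enorm0 -ltNge. Qed.
Let A_neqw a : A a -> a != w.
Proof. by move=> /A_farw; apply: contraTneq => ->; rewrite subrr enorm0 -ltNge. Qed.

Let far_Phiw a : A a -> 2 * rho <= enorm (Phi a - Phi w).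
Proof.
move=> Aa; rewrite mulrC divfK ?pnatr_eq0 // /W.
by apply: enorm_inversion0B_ge => //; [exact: A_neq0 | exact: A_farw].
Qed.

Let far_oppPhiw a : A a -> 2 * sig <= enorm (inversion w a + Phi w).
Proof.
move=> Aa; rewrite mulrC divfK ?pnatr_eq0 // inversionE -[Phi w]opprK -inversion0N.
rewrite /W -[enorm w]enormN.
apply: enorm_inversion0B_ge => //; rewrite ?oppr_eq0 ?subr_eq0 ?opprK ?subrK //.
  exact: A_neqw.
exact: A_far0.
Qed.

Let Lh := (W ^+ 2 * sig ^+ 2)^-1.

Lemma nbhd_inversion_sub e : 0 < e -> e < sig -> Lh * e < rho ->
  eps_nbhd (inversion w @` A) e `<=`
  reinversion w @` (eps_nbhd (Phi @` A) (Lh * e) `&` [set x | rho <= enorm (x - Phi w)]).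
Proof.
move=> e_gt0 e_sig Le_rho y [_ [a Aa <-] ya].
have far_y : sig <= enorm (y + Phi w).
  have := enormB_tri (inversion w a) y (- Phi w); rewrite !opprK enormB.
  by have := far_oppPhiw Aa; lra.
have y_neq : y != - Phi w.
  by apply: contraTneq far_y => ->; rewrite addNr enorm0 -ltNge.
have near_Phia : enorm (reinversion (- w) y - Phi a) < Lh * e.
  rewrite -(reinversion_inversion (A_neqw Aa)).
  apply: (le_lt_trans (reinversion_lipschitz _ sig_gt0 _ _)); rewrite ?oppr_eq0 //.
  - by rewrite inversion0N opprK.
  - by rewrite inversion0N opprK; have := far_oppPhiw Aa; lra.
  - by rewrite enormN /Lh /W ltr_pM2l // invr_gt0 mulr_gt0 ?exprn_gt0.
exists (reinversion (- w) y); last exact: reinversionK.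
split; first by exists (Phi a); first exists a.
have := enormB_tri (Phi a) (reinversion (- w) y) (Phi w).
rewrite [enorm (Phi a - reinversion _ _)]enormB /=.
by have := far_Phiw Aa; lra.
Qed.

Let Lg := (W ^+ 2 * rho ^+ 2)^-1.

Lemma inversion_nbhd_dominated_nondeg : (0 < n)%N ->
  nbhd_outer_dominated (Phi @` A) (inversion w @` A).
Proof.
move=> n_gt0.
have Lg_gt0 : 0 < Lg by rewrite invr_gt0 mulr_gt0 ?exprn_gt0.
have Lh_gt0 : 0 < Lh by rewrite invr_gt0 mulr_gt0 ?exprn_gt0.
exists (lipschitz_outer_factor n Lg), Lh, (Num.min sig (rho / Lh)).
split; [exact: lipschitz_outer_factor_gt0 | exact: Lh_gt0 | by rewrite lt_min sig_gt0 divr_gt0 |].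
move=> e e_gt0; rewrite lt_min => /andP[e_sig e_rho].
have Le_rho : Lh * e < rho by rewrite mulrC -ltr_pdivlMr.
apply: (le_trans (le_outer (nbhd_inversion_sub e_gt0 e_sig Le_rho))).
apply: (le_trans (outer_lipschitz_image n_gt0 Lg_gt0 _)).
  by move=> x z [_ x_far] [_ z_far]; apply: reinversion_lipschitz.
apply: lee_wpmul2l; first by rewrite lee_fin ltW // lipschitz_outer_factor_gt0.
by apply: le_outer => x [].
Qed.

End InversionNeighbourhoods.

Section InversionDominated.
Variables (R : realType) (n : nat).
Local Notation V := 'rV[R]_n.
Local Notation Phi := (@inversion R n 0).
Variables (A : set V) (w : V) (d0 dw : R).
Hypotheses (d0_gt0 : 0 < d0) (dw_gt0 : 0 < dw).
Hypothesis A_far0 : forall a, A a -> d0 <= enorm a.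
Hypothesis A_farw : forall a, A a -> dw <= enorm (a - w).

Lemma inversion_nbhd_dominated : nbhd_outer_dominated (Phi @` A) (inversion w @` A).
Proof.
have [n0|n_gt0] := posnP n.
  have -> : A = set0.
    apply/seteqP; split => // a /A_far0; rewrite enorm_dim0 //.
    by move=> /(lt_le_trans d0_gt0); rewrite ltxx.
  by rewrite !image_set0; exact: nbhd_outer_dominated_refl.
have [->|w0] := eqVneq w 0; first exact: nbhd_outer_dominated_refl.
exact: inversion_nbhd_dominated_nondeg d0_gt0 dw_gt0 w0 A_far0 A_farw n_gt0.
Qed.

End InversionDominated.

Section Proposition.
Variables (R : realType) (n : nat).
Local Notation V := 'rV[R]_n.
Local Notation Phi := (@inversion R n 0).
Variables (A : set V) (w : V) (d0 dw : R).
Hypotheses (d0_gt0 : 0 < d0) (dw_gt0 : 0 < dw).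
Hypothesis A_far0 : forall a, A a -> d0 <= enorm a.
Hypothesis A_farw : forall a, A a -> dw <= enorm (a - w).

Let A_neq0 a : A a -> a != 0.
Proof. by move=> /A_far0; apply: contraTneq => ->; rewrite enorm0 -ltNge. Qed.
Let A_neqw a : A a -> a != w.
Proof. by move=> /A_farw; apply: contraTneq => ->; rewrite subrr enorm0 -ltNge. Qed.

(* Both inversions of [A] become [Phi] of a translate of [A], the roles of [0] and [w]
   being swapped by the translation [a |-> a - w]. *)
Lemma inversion_box_dims_eq :
  upper_box_dim (Phi @` A) = upper_box_dim (inversion w @` A) /\
  lower_box_dim (Phi @` A) = lower_box_dim (inversion w @` A).
Proof.
apply: box_dims_eq_dominated; first exact: inversion_nbhd_dominated d0_gt0 dw_gt0 A_far0 A_farw.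
pose A' := (fun a => a - w) @` A.
have -> : Phi @` A = inversion (- w) @` A'.
  by rewrite /A' image_comp; apply: eq_imagel => a _ /=; rewrite [inversion (- w) _]inversionE opprK subrK.
have -> : inversion w @` A = Phi @` A'.
  by rewrite /A' image_comp; apply: eq_imagel => a _ /=; rewrite [inversion w _]inversionE.
apply: (inversion_nbhd_dominated (A := A') dw_gt0 d0_gt0).
  by move=> _ [a Aa <-]; exact: A_farw.
by move=> _ [a Aa <-]; rewrite opprK subrK; exact: A_far0.
Qed.

Lemma bi_lipschitz_reinversion : bi_lipschitz_on (Phi @` A) (inversion w \o Phi).
Proof.
pose al := 1 + enorm w / d0; pose be := 1 + enorm w / dw.
have al_gt0 : 0 < al by have := divr_ge0 (enorm_ge0 w) (ltW d0_gt0); rewrite /al; lra.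
have be_gt0 : 0 < be by have := divr_ge0 (enorm_ge0 w) (ltW dw_gt0); rewrite /be; lra.
exists (al ^+ 2)^-1, (be ^+ 2); split; first by rewrite invr_gt0 exprn_gt0.
split; first by rewrite exprn_gt0.
move=> _ _ [a Aa <-] [b Ab <-] /=; rewrite !inversion0K !(inversionE w).
have aw0 : a - w != 0 by rewrite subr_eq0 A_neqw.
have bw0 : b - w != 0 by rewrite subr_eq0 A_neqw.
rewrite (enorm_inversion0B aw0 bw0) (enorm_inversion0B (A_neq0 Aa) (A_neq0 Ab)).
rewrite opprB addrA subrK.
set X := enorm (a - b); have X0 : 0 <= X := enorm_ge0 _.
have ab_gt0 : 0 < enorm a * enorm b by rewrite mulr_gt0 ?enorm_gt0 ?A_neq0.
have abw_gt0 : 0 < enorm (a - w) * enorm (b - w) by rewrite mulr_gt0 ?enorm_gt0.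
have le_al c : A c -> enorm (c - w) <= enorm c * al.
  by move=> Ac; apply: enorm_subr_le; rewrite ?A_far0.
have le_be c : A c -> enorm c <= enorm (c - w) * be.
  move=> Ac; have := enorm_subr_le (- w) dw_gt0 (A_farw Ac).
  by rewrite opprK subrK enormN.
split.
- rewrite mulrCA -invfM; apply: ler_pdiv_cross => //; first by rewrite mulr_gt0 ?exprn_gt0.
  apply: ler_wpM2l => //; rewrite expr2 mulrACA.
  by apply: ler_pM; rewrite ?enorm_ge0 // mulrC; apply: le_al.
- rewrite mulrA; apply: ler_pdiv_cross => //; rewrite [_ * X]mulrC -mulrA.
  apply: ler_wpM2l => //; rewrite expr2 mulrACA.
  by apply: ler_pM; rewrite ?enorm_ge0 // mulrC; apply: le_be.
Qed.

End Proposition.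

Lemma not_closure_enorm_gap (R : realType) (n : nat) (A : set 'rV[R]_n) (x : 'rV[R]_n) :
  ~ closure A x -> exists2 r, 0 < r & forall a, A a -> r <= enorm (a - x).
Proof.
move=> x_nclosure; apply: contrapT => no_gap; apply: x_nclosure => B /nbhs_ballP [e e_gt0 eB].
have /existsNP [a /not_implyP [Aa /negP]] : ~ (forall a, A a -> e <= enorm (a - x)).
  by move=> gap; apply: no_gap; exists e.
rewrite -ltNge => ax; exists a; split => //; apply: eB.
rewrite mx_norm_ball /ball_ /= -[`|_|]/(mx_norm _) mx_normrE.
apply: bigmax_lt => // -[i j] _ /=; rewrite !mxE (ord1 i).
by apply: le_lt_trans ax; rewrite distrC; have := coord_le_enorm (a - x) j; rewrite !mxE.
Qed.

Theorem proposition2p4 (R : realType) (n : nat) (A : set 'rV[R]_n) (w : 'rV[R]_n)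
  (h0 : ~ closure A 0) (hw : ~ closure A w) :
  let Phi := inversion 0 in
  let Psi := inversion w in
  bi_lipschitz_on (Phi @` A) (Psi \o Phi) /\
  upper_box_dim (Phi @` A) = upper_box_dim (Psi @` A) /\
  lower_box_dim (Phi @` A) = lower_box_dim (Psi @` A).
Proof.
move=> Phi Psi.
have [d0 d0_gt0 A_far0] := not_closure_enorm_gap h0.
have {}A_far0 a : A a -> d0 <= enorm a by move=> /A_far0; rewrite subr0.
have [dw dw_gt0 A_farw] := not_closure_enorm_gap hw.
split; first exact: bi_lipschitz_reinversion d0_gt0 dw_gt0 A_far0 A_farw.
exact: inversion_box_dims_eq d0_gt0 dw_gt0 A_far0 A_farw.
Qed.
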